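(* In the RSP setting described in the context, for every $i\ge 0$ we have $C_{\mathrm{opt}}(G^-_{S_{i+1}})\ge 2\,C_{\mathrm{opt}}(G^-_{S_i})$. Consequently, if $b\in\mathbb{N}^+$ and $i^*$ is the smallest integer $i\ge0$ with $C_{\mathrm{opt}}(G^-_{S_i})>b$, then for every $0\le i<i^*$, $$C_{\mathrm{opt}}(G^-_{S_i})\le 2^{-(i^*-1-i)}C_{\mathrm{opt}}(G^-_{S_{i^*-1}})\le 2^{i+1-i^*}\cdot b .$$
   Context: RSP setting: $G=(V,E,c,r)$ is a weakly connected directed graph with $n=|V|$, $m=|E|$, $c,r:E\to\mathbb{R}_{\ge0}$, vertices $s\ne t$, bound $R\ge 0$. Paths are edge sets; $P_v$ = set of paths from $s$ to $v$; $C_G(p)=\sum_{e\in p}c(e)$, $R_G(p)=\sum_{e\in p}r(e)$; $C_{\mathrm{opt}}(G)=\min\{C_G(p):p\in P_t,\ R_G(p)\le R\}$. It is assumed that a path $p\in P_t$ with $R_G(p)\le R$ exists and that $C_{\mathrm{opt}}(G)>0$. For $S>0$, $G^-_S=(V,E,c^-_S,r)$ with $c^-_S(e)=\lfloor c(e)/S\rfloor$ (same $s,t,R$). Bounds $L,U$: sort the edges $e_1,\dots,e_m$ ascending by cost; let $j^*$ be the smallest $j$ such that some $p\in P_t$ with $R_G(p)\le R$ uses only edges from $\{e_1,\dots,e_j\}$; set $L=c(e_{j^*})$ and $U=nL$. Scaling factors: $S_i=2^{-i}U/(2n)$ for $i\in\mathbb{N}_0$. *)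

From HB Require Import structures.
From mathcomp Require Import all_boot all_order all_algebra.
From mathcomp Require Import boolp classical_sets reals.
Set Implicit Arguments. Unset Strict Implicit. Unset Printing Implicit Defensive.
Import Order.TTheory GRing.Theory Num.Theory.
Local Open Scope ring_scope.
Local Open Scope classical_set_scope.

(* A directed multigraph: vertices V, edges E, each edge e goes from src e to dst e. *)

Fixpoint walk_from (V E : finType) (src dst : E -> V) (x : V) (p : seq E) : bool :=
  match p with
  | [::] => true
  | e :: p' => (src e == x) && walk_from src dst (dst e) p'
  end.

Definition is_path (V E : finType) (src dst : E -> V) (s v : V) (X : {set E}) : Prop :=
  exists p : seq E,
    [/\ X = [set e in p], walk_from src dst s p,
        last s (map dst p) = v & uniq (s :: map dst p)].

Definition weakly_connected (V E : finType) (src dst : E -> V) : Prop :=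
  forall x y : V,
    connect (fun a b => [exists e : E, ((src e == a) && (dst e == b))
                                   || ((src e == b) && (dst e == a))]) x y.

Definition wsum (R : realType) (E : finType) (w : E -> R) (X : {set E}) : R :=
  \sum_(e in X) w e.

(* C_opt for costs c, resources r, bound Rb: minimum (infimum; the set is finite)
   of the costs of s-t paths with resource <= Rb *)
Definition Copt (R : realType) (V E : finType) (src dst : E -> V) (s t : V)
    (c r : E -> R) (Rb : R) : R :=
  inf [set wsum c X | X in [set X | is_path src dst s t X /\ wsum r X <= Rb]].

Definition cminus (R : realType) (E : finType) (c : E -> R) (S : R) : E -> R :=
  fun e => (Num.floor (c e / S))%:~R.

Definition uses_prefix (E : finType) (es : seq E) (j : nat) (X : {set E}) : Prop :=
  forall e, e \in X -> e \in take j es.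

Definition feasible_prefix (R : realType) (V E : finType) (src dst : E -> V)
    (s t : V) (r : E -> R) (Rb : R) (es : seq E) (j : nat) : Prop :=
  exists X, [/\ is_path src dst s t X, wsum r X <= Rb & uses_prefix es j X].

Definition Sfac (R : realType) (U : R) (n i : nat) : R :=
  2 ^- i * U / (2 * n%:R).

From HB Require Import structures.
From mathcomp Require Import all_boot all_order all_algebra.
From mathcomp Require Import boolp classical_sets reals.
Import Order.TTheory GRing.Theory Num.Theory.
Local Open Scope ring_scope.

(* Since [floor (2 x) >= 2 floor x], halving the scaling factor at least
   doubles every rounded-down cost, hence every path cost and therefore the
   constrained optimum.  Iterating gives
   [C_opt(G^-_{S_j}) >= 2^(j-i) C_opt(G^-_{S_i})] for [i <= j], and below the
   threshold index [i*] the optima are at most [b] by minimality of [i*].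
   Only the nonnegativity of the costs (which makes [U] and all [S_i]
   nonnegative) and the existence of a feasible path are needed. *)

Lemma floor_mulrn (R : archiRealDomainType) (x : R) (n : nat) :
  Num.floor x *+ n <= Num.floor (x *+ n).
Proof. by rewrite floor_ge_int rmorphMn ler_wMn2r // floor_le. Qed.

Lemma geometric_growth {R : numDomainType} {a : R} {u : nat -> R} :
  0 <= a -> (forall i, a * u i <= u i.+1) ->
  forall i k, a ^+ k * u i <= u (i + k)%N.
Proof.
move=> a_ge0 grow i; elim=> [|k IHk]; first by rewrite addn0 expr0 mul1r.
rewrite addnS exprS -mulrA (le_trans _ (grow _)) //.
by rewrite ler_wpM2l.
Qed.

Section OptimumScaling.
Variables (R : realType) (V E : finType) (src dst : E -> V) (s t : V).
Variables (r : E -> R) (Rb : R).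
Hypothesis feasible : exists X, is_path src dst s t X /\ wsum r X <= Rb.

Lemma Copt_scale_le (k : R) (c c' : E -> R) :
  0 <= k -> (forall e, 0 <= c e) -> (forall e, k * c e <= c' e) ->
  k * Copt src dst s t c r Rb <= Copt src dst s t c' r Rb.
Proof.
move=> k_ge0 c_ge0 le_kc_c'.
have [X feasX] := feasible.
apply: lb_le_inf; first by exists (wsum c' X), X.
move=> _ [Y feasY <-].
have lb_costs : has_lbound
    [set wsum c Z | Z in [set Z | is_path src dst s t Z /\ wsum r Z <= Rb]].
  by exists 0 => _ [Z _ <-]; exact: sumr_ge0.
apply: (@le_trans _ _ (k * wsum c Y)).
  by rewrite ler_wpM2l // (ge_inf lb_costs) //; exists Y.
by rewrite /wsum mulr_sumr ler_sum.
Qed.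

End OptimumScaling.

Lemma cminus_ge0 (R : realType) (E : finType) (c : E -> R) (S : R) :
  (forall e, 0 <= c e) -> 0 <= S -> forall e, 0 <= cminus c S e.
Proof. by move=> c_ge0 S_ge0 e; rewrite ler0z floor_ge0 divr_ge0. Qed.

Lemma cminus_half (R : realType) (E : finType) (c : E -> R) (S : R) e :
  2 * cminus c S e <= cminus c (S / 2) e.
Proof.
by rewrite /cminus invf_div mulrCA !mulr_natl -rmorphMn ler_int floor_mulrn.
Qed.

Lemma Sfac_ge0 (R : realType) (U : R) (n i : nat) : 0 <= U -> 0 <= Sfac U n i.
Proof.
by move=> U_ge0; rewrite /Sfac !(mulr_ge0, divr_ge0, invr_ge0, exprn_ge0).
Qed.

Lemma SfacS (R : realType) (U : R) (n i : nat) :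
  Sfac U n i.+1 = Sfac U n i / 2.
Proof.
by rewrite /Sfac exprSr invfM -!mulrA [_^-1 * (U * _)]mulrCA [_^-1 * _^-1]mulrC.
Qed.

Theorem lemma9 (R : realType) (V E : finType) (src dst : E -> V)
    (c r : E -> R) (s t : V) (Rb : R)
    (hwc : weakly_connected src dst)
    (hc : forall e, 0 <= c e) (hr : forall e, 0 <= r e)
    (hst : s != t) (hRb : 0 <= Rb)
    (hfeas : exists X, is_path src dst s t X /\ wsum r X <= Rb)
    (hpos : 0 < Copt src dst s t c r Rb)
    (* e_1,...,e_m : the edges sorted ascending by cost *)
    (es : seq E) (hes_perm : perm_eq es (enum E))
    (hes_sort : sorted (fun a b => c a <= c b) es)
    (e0 : E)
    (* j* : smallest j with a feasible path using only e_1,...,e_j *)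
    (jstar : nat) (hj : feasible_prefix src dst s t r Rb es jstar)
    (hjmin : forall j, (j < jstar)%N -> ~ feasible_prefix src dst s t r Rb es j)
    (L U : R) (hL : L = c (nth e0 es jstar.-1)) (hU : U = #|V|%:R * L) :
  (forall i : nat,
     Copt src dst s t (cminus c (Sfac U #|V| i.+1)) r Rb
       >= 2 * Copt src dst s t (cminus c (Sfac U #|V| i)) r Rb)
  /\
  (forall (b : nat) (istar : nat), (0 < b)%N ->
     Copt src dst s t (cminus c (Sfac U #|V| istar)) r Rb > b%:R ->
     (forall i, (i < istar)%N ->
        Copt src dst s t (cminus c (Sfac U #|V| i)) r Rb <= b%:R) ->
     forall i : nat, (i < istar)%N ->
       Copt src dst s t (cminus c (Sfac U #|V| i)) r Rb
         <= 2 ^- (istar.-1 - i) * Copt src dst s t (cminus c (Sfac U #|V| istar.-1)) r Rb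
       /\ 2 ^- (istar.-1 - i) * Copt src dst s t (cminus c (Sfac U #|V| istar.-1)) r Rb
         <= 2 ^- (istar.-1 - i) * b%:R).
Proof.
set C := fun i => Copt src dst s t (cminus c (Sfac U #|V| i)) r Rb.
have U_ge0 : 0 <= U by rewrite hU hL mulr_ge0.
have doubling i : 2 * C i <= C i.+1.
  apply: Copt_scale_le => //; first exact/cminus_ge0/Sfac_ge0.
  by move=> e; rewrite SfacS cminus_half.
split=> [|b istar _ _ below_b i lt_i_istar]; first exact: doubling.
have istar_gt0 : (0 < istar)%N by apply: leq_ltn_trans lt_i_istar.
have istar_pred : (i + (istar.-1 - i))%N = istar.-1.
  by rewrite subnKC // -ltnS prednK.
split; last by rewrite ler_wpM2l ?invr_ge0 ?exprn_ge0 // below_b ?ltn_predL.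
have := geometric_growth (ler0n R 2) doubling i (istar.-1 - i).
by rewrite istar_pred -ler_pdivlMl ?exprn_gt0.
Qed.
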